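(* Let $\{a_n\}_{n=1}^\infty\subset(0,1]$ and define $P_n,Q_n:\{-1,1\}^n\to\mathbb{R}$ by $P_0\equiv Q_0\equiv 1$ and \[ P_{n+1}=P_n+\varepsilon_{n+1}a_{n+1}Q_n,\qquad Q_{n+1}=\varepsilon_{n+1}a_{n+1}P_n-Q_n,\qquad n=0,1,\dots \] Then for each $n=1,2,\dots$, \[ I(P_n)=I(Q_n)=\sum_{i=1}^n a_i^2\prod_{1\le j\le n,\ j\ne i}(1+a_j^2). \]
   Context: Here $\varepsilon_i$ denotes the $i$-th coordinate function $\varepsilon_i(\delta_1,\dots,\delta_m)=\delta_i$ on $\{-1,1\}^m$ for $m\ge i$ (functions on $\{-1,1\}^n$ are regarded as functions on $\{-1,1\}^{n+1}$ not depending on the last coordinate). For $A\subseteq[n]$, $W_A=\prod_{i\in A}\varepsilon_i$ and, for $g:\{-1,1\}^n\to\mathbb{R}$, $\hat g(A)=2^{-n}\sum_{\delta\in\{-1,1\}^n}g(\delta)W_A(\delta)$. The influence is $I(g)=\sum_{A\subseteq[n]}\hat g(A)^2|A|$. *)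

From mathcomp Require Import all_boot all_order all_algebra.
Set Implicit Arguments. Unset Strict Implicit. Unset Printing Implicit Defensive.
Import Order.TTheory GRing.Theory Num.Theory.
Local Open Scope ring_scope.

(* A point of {-1,1}^n is encoded as d : {ffun 'I_n -> bool}; coordinate i
   (0-based, i.e. the paper's coordinate i+1) equals -1 if d i = true and 1
   otherwise. *)
Definition sgn {R : pzRingType} (b : bool) : R := if b then -1 else 1.

(* Functions on {-1,1}^n regarded on all {-1,1}^m (m >= n): we represent them
   as functions of an infinite sign sequence e : nat -> R (e k = paper's
   epsilon_{k+1}), which depend only on the first n entries. *)
Definition ext {R : pzRingType} n (d : {ffun 'I_n -> bool}) : nat -> R :=
  fun k => match insub k with Some i => sgn (d i) | None => 1 end.

Definition walsh {R : pzRingType} n (A : {set 'I_n}) (d : {ffun 'I_n -> bool}) : R :=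
  \prod_(i in A) sgn (d i).

Definition fcoef {R : fieldType} n (g : (nat -> R) -> R) (A : {set 'I_n}) : R :=
  (2 ^+ n)^-1 * \sum_(d : {ffun 'I_n -> bool}) g (ext d) * walsh A d.

Definition influence {R : fieldType} n (g : (nat -> R) -> R) : R :=
  \sum_(A : {set 'I_n}) fcoef g A ^+ 2 * #|A|%:R.

(* P_n, Q_n: a i is the paper's a_i (i >= 1); e k is the paper's epsilon_{k+1}. *)
Fixpoint PQ {R : pzRingType} (a : nat -> R) (n : nat) (e : nat -> R) : R * R :=
  match n with
  | 0 => (1, 1)
  | m.+1 => let (p, q) := PQ a m e in
            (p + e m * a m.+1 * q, e m * a m.+1 * p - q)
  end.

Definition Pn {R : pzRingType} (a : nat -> R) n e := (PQ a n e).1.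
Definition Qn {R : pzRingType} (a : nat -> R) n e := (PQ a n e).2.

From mathcomp Require Import all_boot all_order all_algebra ring.
Set Implicit Arguments. Unset Strict Implicit. Unset Printing Implicit Defensive.
Import Order.TTheory GRing.Theory Num.Theory.
Local Open Scope ring_scope.

(* By induction on n, P_n and Q_n are sums, over all S ⊆ [n], of the monomials
   ±∏_{i∈S} a_i ε_i with signs ±1: the monomials of P_{n+1} without ε_{n+1}
   carry the signs of P_n and those with ε_{n+1} the signs of Q_n, while for
   Q_{n+1} they carry the signs of -Q_n and of P_n.  By orthogonality of the
   Walsh functions the coefficient at S is then ±∏_{i∈S} a_i, so the influence
   is Σ_S |S| ∏_{i∈S} a_i² = Σ_i a_i² ∏_{j≠i} (1 + a_j²). *)

Section FfunSnoc.
Variables (T : finType) (n : nat).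

Definition ffun_init (f : {ffun 'I_n.+1 -> T}) : {ffun 'I_n -> T} :=
  [ffun i => f (lift ord_max i)].

Definition ffun_snoc (f : {ffun 'I_n -> T}) (x : T) : {ffun 'I_n.+1 -> T} :=
  [ffun i => if unlift ord_max i is Some j then f j else x].

Lemma ffun_snoc_last f x : ffun_snoc f x ord_max = x.
Proof. by rewrite ffunE unlift_none. Qed.

Lemma ffun_snoc_widen f x (i : 'I_n) : ffun_snoc f x (widen_ord (leqnSn n) i) = f i.
Proof.
have -> : widen_ord (leqnSn n) i = lift ord_max i.
  by apply: val_inj; rewrite /= /bump leqNgt ltn_ord.
by rewrite ffunE liftK.
Qed.

Lemma ffun_init_snoc f x : ffun_init (ffun_snoc f x) = f.
Proof. by apply/ffunP => i; rewrite !ffunE liftK. Qed.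

Lemma ffun_snoc_init f : ffun_snoc (ffun_init f) (f ord_max) = f.
Proof.
apply/ffunP => i; rewrite ffunE.
by case: unliftP => [j ->|->] //; rewrite ffunE.
Qed.

Lemma big_ffun_snoc (R : Type) (idx : R) (op : Monoid.com_law idx)
    (F : {ffun 'I_n.+1 -> T} -> R) :
  \big[op/idx]_f F f = \big[op/idx]_f \big[op/idx]_x F (ffun_snoc f x).
Proof.
rewrite pair_big (reindex (fun p => ffun_snoc p.1 p.2)) //=.
exists (fun f => (ffun_init f, f ord_max)) => [[f x] _|f _] /=.
  by rewrite ffun_init_snoc ffun_snoc_last.
by rewrite ffun_snoc_init.
Qed.

End FfunSnoc.

Lemma sgn_negb (R : pzRingType) (b : bool) : sgn (~~ b) = - sgn b :> R.
Proof. by case: b; rewrite /= ?opprK. Qed.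

Lemma sqr_sgn (R : pzRingType) (b : bool) : sgn b ^+ 2 = 1 :> R.
Proof. by case: b; rewrite /= ?sqrrN expr1n. Qed.

Lemma ext_ord (R : pzRingType) n (d : {ffun 'I_n -> bool}) (i : 'I_n) :
  ext d i = sgn (d i) :> R.
Proof. by rewrite /ext valK. Qed.

Lemma sum_prod_set_card (R : comPzRingType) (I : finType) (b : I -> R) :
  \sum_(A : {set I}) (\prod_(i in A) b i) * #|A|%:R =
  \sum_k b k * \prod_(i | i != k) (1 + b i).
Proof.
have card_sum (A : {set I}) : #|A|%:R = \sum_k (k \in A)%:R :> R.
  rewrite -sum1_card natr_sum big_mkcond; apply: eq_bigr => i _.
  by case: (i \in A).
under eq_bigr do rewrite card_sum mulr_sumr.
rewrite exchange_big /=; apply: eq_bigr => k _.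
have indicator (A : {set I}) :
    (k \in A)%:R = \prod_i (if i \in A then 1 else (i != k)%:R) :> R.
  rewrite (bigD1 k) //= eqxx big1 => [|i /negbTE ik]; last by case: ifP; rewrite ?ik.
  by case: (k \in A); rewrite mulr1.
have split_prod (A : {set I}) : (\prod_(i in A) b i) * (k \in A)%:R =
    \prod_i (if i \in A then b i else (i != k)%:R).
  rewrite indicator big_mkcond -big_split /=.
  by apply: eq_bigr => i _; case: (i \in A); rewrite ?mulr1 ?mul1r.
under eq_bigr do rewrite split_prod.
rewrite -(bigA_distr 1 +%R b (fun i => (i != k)%:R)) (bigD1 k) //= eqxx addr0.
by congr (_ * _); apply: eq_bigr => i ik; rewrite ik addrC.
Qed.

Section SignedExpansion.
Variables (R : comPzRingType) (a : nat -> R).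

Definition monom n (f : {ffun 'I_n -> bool}) (e : nat -> R) : R :=
  \prod_(i < n) (if f i then a i.+1 * e i else 1).

Definition monom_sum n (s : {ffun 'I_n -> bool} -> bool) (e : nat -> R) : R :=
  \sum_f sgn (s f) * monom f e.

Lemma monom_snoc n (f : {ffun 'I_n -> bool}) b e :
  monom (ffun_snoc f b) e = monom f e * (if b then a n.+1 * e n else 1).
Proof.
rewrite /monom big_ord_recr /= ffun_snoc_last.
by congr (_ * _); apply: eq_bigr => i _; rewrite ffun_snoc_widen.
Qed.

Lemma Pn_S n e : Pn a n.+1 e = Pn a n e + e n * a n.+1 * Qn a n e.
Proof. by rewrite /Pn /Qn /=; case: (PQ a n e). Qed.

Lemma Qn_S n e : Qn a n.+1 e = e n * a n.+1 * Pn a n e - Qn a n e.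
Proof. by rewrite /Pn /Qn /=; case: (PQ a n e). Qed.

Lemma PQ_monom_sum n : exists sP sQ : {ffun 'I_n -> bool} -> bool,
  Pn a n =1 monom_sum sP /\ Qn a n =1 monom_sum sQ.
Proof.
elim: n => [|n [sP [sQ [eP eQ]]]].
  have sum0 e : monom_sum (n := 0) (fun=> false) e = 1.
    rewrite /monom_sum /monom.
    under eq_bigr do rewrite big_ord0 mulr1.
    by rewrite sumr_const card_ffun card_bool card_ord.
  by exists (fun=> false), (fun=> false); split=> e; rewrite sum0.
exists (fun f : {ffun 'I_n.+1 -> bool} =>
  if f ord_max then sQ (ffun_init f) else sP (ffun_init f)).
exists (fun f : {ffun 'I_n.+1 -> bool} =>
  if f ord_max then sP (ffun_init f) else ~~ sQ (ffun_init f)).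
split=> e; rewrite /monom_sum big_ffun_snoc.
  rewrite Pn_S eP eQ /monom_sum mulr_sumr -big_split; apply: eq_bigr => f _.
  by rewrite big_bool /= !monom_snoc !ffun_snoc_last !ffun_init_snoc; ring.
rewrite Qn_S eP eQ /monom_sum mulr_sumr -sumrN -big_split; apply: eq_bigr => f _.
by rewrite big_bool /= !monom_snoc !ffun_snoc_last !ffun_init_snoc sgn_negb; ring.
Qed.

Lemma sum_monom_walsh n (f : {ffun 'I_n -> bool}) (A : {set 'I_n}) :
  \sum_d monom f (ext d) * walsh A d =
  if f == [ffun i => i \in A] then 2 ^+ n * \prod_(i in A) a i.+1 else 0.
Proof.
pose G i (c : bool) :=
  (if f i then a i.+1 * sgn c else 1) * (if i \in A then sgn c else 1).
have factor d : monom f (ext d) * walsh A d = \prod_i G i (d i).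
  rewrite /monom /walsh (big_mkcond (mem A)) -big_split.
  by under eq_bigr do rewrite ext_ord.
have sum_G i : \sum_c G i c =
    if f i == (i \in A) then 2 * (if i \in A then a i.+1 else 1) else 0.
  by rewrite big_bool /G /=; case: (f i); case: (i \in A) => /=; ring.
rewrite (eq_bigr _ (fun d _ => factor d)).
rewrite -bigA_distr_bigA; under eq_bigr do rewrite sum_G.
case: eqP => [->|f_neq].
  under eq_bigr do rewrite ffunE eqxx.
  by rewrite big_split prodr_const card_ord -big_mkcond.
have [i fi_neq] : exists i, f i != (i \in A).
  apply/existsP; rewrite -negb_forall; apply/forallP => /= f_eq.
  by apply: f_neq; apply/ffunP => i; rewrite ffunE; apply/eqP.
by rewrite (bigD1 i) //= (negbTE fi_neq) mul0r.
Qed.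

End SignedExpansion.

Section Influence.
Variables (R : fieldType) (a : nat -> R).
Hypothesis two_neq0 : 2 != 0 :> R.

Lemma fcoef_monom_sum n (g : (nat -> R) -> R) s (A : {set 'I_n}) :
  g =1 monom_sum a s ->
  fcoef g A = sgn (s [ffun i => i \in A]) * \prod_(i in A) a i.+1.
Proof.
move=> eg; rewrite /fcoef.
have -> : \sum_d g (ext d) * walsh A d = \sum_f sgn (s f) *
    (if f == [ffun i => i \in A] then 2 ^+ n * \prod_(i in A) a i.+1 else 0).
  rewrite (eq_bigr (fun d => \sum_f sgn (s f) * (monom a f (ext d) * walsh A d))).
    by rewrite exchange_big; apply: eq_bigr => f _; rewrite -mulr_sumr sum_monom_walsh.
  move=> d _; rewrite eg /monom_sum mulr_suml.
  by apply: eq_bigr => f _; rewrite mulrA.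
rewrite (bigD1 [ffun i => i \in A]) //= [X in _ + X]big1 => [|f f_neq]; last first.
  by rewrite (negbTE f_neq) mulr0.
by rewrite eqxx addr0 mulrCA mulKf // expf_neq0.
Qed.

Lemma influence_monom_sum n (g : (nat -> R) -> R) (s : {ffun 'I_n -> bool} -> bool) :
  g =1 monom_sum a s ->
  influence n g = \sum_(k < n) a k.+1 ^+ 2 * \prod_(i < n | i != k) (1 + a i.+1 ^+ 2).
Proof.
move=> eg; rewrite /influence -(sum_prod_set_card (fun i : 'I_n => a i.+1 ^+ 2)).
by apply: eq_bigr => A _; rewrite (fcoef_monom_sum _ eg) exprMn sqr_sgn mul1r prodrXl.
Qed.

End Influence.

Theorem proposition2 (R : realFieldType) (a : nat -> R)
  (ha : forall i, (1 <= i)%N -> 0 < a i <= 1) (n : nat) (hn : (1 <= n)%N) :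
  influence n (Pn a n) =
    \sum_(1 <= i < n.+1) a i ^+ 2 * \prod_(1 <= j < n.+1 | j != i) (1 + a j ^+ 2) /\
  influence n (Qn a n) =
    \sum_(1 <= i < n.+1) a i ^+ 2 * \prod_(1 <= j < n.+1 | j != i) (1 + a j ^+ 2).
Proof.
have two_neq0 : 2 != 0 :> R by rewrite pnatr_eq0.
have shift_index :
    \sum_(1 <= i < n.+1) a i ^+ 2 * \prod_(1 <= j < n.+1 | j != i) (1 + a j ^+ 2) =
    \sum_(k < n) a k.+1 ^+ 2 * \prod_(i < n | i != k) (1 + a i.+1 ^+ 2).
  rewrite big_add1 big_mkord; apply: eq_bigr => k _.
  by rewrite big_add1 big_mkord.
have [sP [sQ [eP eQ]]] := PQ_monom_sum a n.
rewrite shift_index.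
by split; [exact: influence_monom_sum eP | exact: influence_monom_sum eQ].
Qed.
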